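(* Let $V$ be a vector configuration and $W\subseteq V$ a subconfiguration such that $\operatorname{lin}(W)\cap V=W$. Then the following three equalities are equivalent: (i) $\mathrm{DD}(V)=\mathrm{DD}(W)+\mathrm{DD}(V/W)$; (ii) $\deg^*(V)=\deg^*(W)+\deg^*(V/W)$; (iii) $\operatorname{codeg}^*(V)=\operatorname{codeg}^*(W)+\operatorname{codeg}^*(V/W)$.
   Context: A vector configuration is a finite family (repetitions allowed) $U$ of vectors in a real vector space $E$; a subconfiguration is a subfamily, $\operatorname{rank}(U)=\dim\operatorname{lin}(U)$, cardinalities count multiplicities. The quotient $V/W$ is the configuration in $E/\operatorname{lin}(W)$ of the images of the elements of $V\setminus W$. For a nonzero linear functional $f$ on $E$, the oriented linear hyperplane $H=\{f=0\}$ has $H^+=\{f>0\}$, $\overline{H}^-=\{f\le0\}$. Dual codegree: $\operatorname{codeg}^*(U)=\min_H|\overline{H}^-\cap U|$; dual degree: $\deg^*(U)=\max_H|H^+\cap U|-\operatorname{rank}(U)$, over oriented linear hyperplanes $H$. Covector discrepancy: $\mathrm{DD}(U)=\max_f\big|\,|\{u: f(u)>0\}|-|\{u:f(u)<0\}|\,\big|$ over all linear functionals $f$. *)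

From HB Require Import structures.
From mathcomp Require Import all_boot all_order all_algebra.
From mathcomp Require Import boolp reals.
Set Implicit Arguments. Unset Strict Implicit. Unset Printing Implicit Defensive.
Import Order.TTheory GRing.Theory Num.Theory.
Local Open Scope ring_scope.

(* A vector configuration in E = R^n (row vectors 'rV[R]_n) is a finite family
   indexed by a subset A of a finite index type I:  (A, U) with U : I -> 'rV_n;
   repetitions are allowed since U need not be injective, and all cardinalities
   are cardinalities of index sets, i.e. count multiplicities. *)

Section Config.
Variables (R : realType) (n : nat) (I : finType).
Implicit Types (A : {set I}) (U : I -> 'rV[R]_n) (c : 'cV[R]_n).

Definition fval c (u : 'rV[R]_n) : R := (u *m c) 0 0.

(* lin(U) as a (square) matrix whose row space is the span *)
Definition clin A U : 'M[R]_n := (\sum_(i in A) <<U i>>)%MS.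
Definition crank A U : nat := \rank (clin A U).

Definition npos c A U : nat := #|[set i in A | 0 < fval c (U i)]|.
Definition nneg c A U : nat := #|[set i in A | fval c (U i) < 0]|.
Definition nnonpos c A U : nat := #|[set i in A | fval c (U i) <= 0]|.

(* dual codegree: min over oriented linear hyperplanes {f = 0} (f <> 0)
   of |closed negative side ∩ U|  (fallback #|A| if there is no hyperplane,
   i.e. n = 0) *)
Definition codeg_star A U : nat :=
  \big[minn/#|A|]_(k < #|A|.+1 | `[< exists c, c != 0 /\ nnonpos c A U = k >])
     (k : nat).

Definition deg_star A U : int :=
  (\max_(k < #|A|.+1 | `[< exists c, c != 0 /\ npos c A U = k >]) (k : nat))%:Z
  - (crank A U)%:Z.

Definition DD A U : nat :=
  \max_(k < #|A|.+1 |
     `[< exists c, `|(npos c A U)%:Z - (nneg c A U)%:Z|%N = k >]) (k : nat).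

(* quotient V/W, W = (S, V): the map E -> E/lin(W) is realized concretely
   as u |-> u *m cokermx (clin S V), whose kernel is exactly lin(W)
   (mathcomp: submxE).  V/W is indexed by ~: S. *)
Definition qmap S U : 'M[R]_n := cokermx (clin S U).
Definition quot S U : I -> 'rV[R]_n := fun i => U i *m qmap S U.

End Config.

From HB Require Import structures.
From mathcomp Require Import all_boot all_order all_algebra.
From mathcomp Require Import boolp reals.
From mathcomp Require Import lra zify.
Import Order.TTheory GRing.Theory Num.Theory.
Local Open Scope ring_scope.

(* All three invariants are affine in the same few quantities.  Passing to
   complementary half-spaces gives deg^*(U) = |U| - codeg^*(U) - rank(U), and
   DD(U) = |U| + z(U) - 2 codeg^*(U), where z(U) counts the zero vectors: adding a
   small generic functional to f breaks the ties on the hyperplane of f in the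
   favourable direction.  Cardinality and rank are additive over W and V/W, and
   lin(W) ∩ V = W puts every zero vector of V into W and none into V/W, so each of
   (i), (ii), (iii) is equivalent to the additivity of codeg^*. *)

Lemma small_perturbation {R : realFieldType} (s : seq (R * R)) :
  exists2 e : R, 0 < e & forall p, p \in s -> p.1 != 0 -> e * `|p.2| < `|p.1|.
Proof.
elim: s => [|[a b] s [e e0 He]]; first by exists 1.
have [->|a0] := eqVneq a 0.
  by exists e => // p; rewrite inE => /orP[/eqP-> /=|/He//]; rewrite eqxx.
have b1 : 0 < `|b| + 1 by rewrite ltr_wpDl.
set t := `|a| / (`|b| + 1).
have t0 : 0 < t by rewrite divr_gt0 ?normr_gt0.
have ta : t * (`|b| + 1) = `|a| by rewrite divfK ?gt_eqF.
exists (Num.min e t); first by rewrite lt_min e0.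
move=> p; rewrite inE => /orP[/eqP-> _ /=|ps p0].
  have : Num.min e t <= t by rewrite ge_min lexx orbT.
  have := normr_ge0 b; nra.
have : Num.min e t <= e by rewrite ge_min lexx.
have := He p ps p0; have := normr_ge0 p.2; nra.
Qed.

Lemma le0_perturb {R : realFieldType} (a b : R) :
  `|b| < `|a| -> (a + b <= 0) = (a <= 0).
Proof.
case: (ltrgtP a 0) => ha; last by rewrite ha normr0 normr_lt0.
- by rewrite (ltr0_norm ha) ltr_norml => /andP[_ hb]; apply/idP; lra.
- by rewrite (gtr0_norm ha) ltr_norml => /andP[hb _]; apply/negbTE; lra.
Qed.

Section Counting.
Context {R : realType} {n : nat} {I : finType}.
Implicit Types (A : {set I}) (U : I -> 'rV[R]_n) (c h : 'cV[R]_n) (u : 'rV[R]_n).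

Lemma fvalDl c h u : fval (c + h) u = fval c u + fval h u.
Proof. by rewrite /fval mulmxDr mxE. Qed.

Lemma fvalZl a c u : fval (a *: c) u = a * fval c u.
Proof. by rewrite /fval -scalemxAr mxE. Qed.

Lemma fvalNl c u : fval (- c) u = - fval c u.
Proof. by rewrite /fval mulmxN mxE. Qed.

Lemma fval0l u : fval 0 u = 0.
Proof. by rewrite /fval mulmx0 mxE. Qed.

Lemma fval0r c : fval c 0 = 0.
Proof. by rewrite /fval mul0mx mxE. Qed.

Lemma cV_dim0 c : n = 0%N -> c = 0.
Proof. by move=> n0; apply/matrixP => i; have := ltn_ord i; rewrite {2}n0. Qed.

Lemma fval_trmx_gt0 u : u != 0 -> 0 < fval u^T u.
Proof.
move=> u0; rewrite /fval mxE lt0r.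
have sq_ge0 j : 0 <= u 0 j * u^T j 0 by rewrite mxE -expr2 sqr_ge0.
rewrite sumr_ge0 // andbT; apply: contra u0 => /eqP/psumr_eq0P sq0.
apply/eqP/matrixP => i j; rewrite (ord1 i) mxE.
by have /eqP := sq0 (fun j _ => sq_ge0 j) j isT; rewrite mxE mulf_eq0 orbb => /eqP.
Qed.

(* Inductively, if [g] vanishes on a nonzero [u], move it slightly towards [u^T]. *)
Lemma exists_generic_functional (s : seq 'rV[R]_n) :
  exists g, forall u, u \in s -> u != 0 -> fval g u != 0.
Proof.
elim: s => [|u s [g Hg]]; first by exists 0.
have [gu0|gu] := eqVneq (fval g u) 0; last first.
  by exists g => w; rewrite inE => /orP[/eqP->|/Hg].
have [u0|u0] := eqVneq u 0.
  by exists g => w; rewrite inE => /orP[/eqP->|/Hg//]; rewrite u0 eqxx.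
have [e e0 He] := small_perturbation [seq (fval g w, fval u^T w) | w <- s].
exists (g + e *: u^T) => w; rewrite inE fvalDl fvalZl => /orP[/eqP->|ws] w0.
  by rewrite gu0 add0r mulf_neq0 ?gt_eqF ?fval_trmx_gt0.
have /He /= small := map_f (fun w => (fval g w, fval u^T w)) ws.
apply: contraTneq (small (Hg w ws w0)) => /eqP; rewrite addr_eq0 => /eqP->.
by rewrite normrN normrM (gtr0_norm e0) ltxx.
Qed.

Definition nzero A U : nat := #|[set i in A | U i == 0]|.
Definition nnull c A U : nat := #|[set i in A | (U i != 0) && (fval c (U i) == 0)]|.

Lemma card_set_sum A (P : pred I) : #|[set i in A | P i]| = (\sum_(i in A) P i)%N.
Proof.
rewrite -sum1_card big_mkcond [RHS]big_mkcond; apply: eq_bigr => i _.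
by rewrite !inE; case: (i \in A); case: (P i).
Qed.

Lemma card_set_le A (P : pred I) : (#|[set i in A | P i]| <= #|A|)%N.
Proof. by apply/subset_leq_card/subsetP => i; rewrite inE => /andP[]. Qed.

Lemma npos_nnonpos c A U : (npos c A U + nnonpos c A U)%N = #|A|.
Proof.
rewrite /npos /nnonpos !card_set_sum -big_split -sum1_card.
by apply: eq_bigr => i _; case: ltrP.
Qed.

Lemma nnonpos_split c A U : nnonpos c A U = (nneg c A U + nzero A U + nnull c A U)%N.
Proof.
rewrite /nnonpos /nneg /nzero /nnull !card_set_sum -!big_split /=.
apply: eq_bigr => i _; case: eqVneq => [->|_]; first by rewrite fval0r ltxx lexx.
by case: ltrgtP.
Qed.

Lemma nposN c A U : npos (- c) A U = nneg c A U.
Proof. by apply: eq_card => i; rewrite !inE fvalNl oppr_gt0. Qed.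

Lemma nnegN c A U : nneg (- c) A U = npos c A U.
Proof. by apply: eq_card => i; rewrite !inE fvalNl oppr_lt0. Qed.

Lemma npos0 A U : npos 0 A U = 0%N.
Proof. by apply: eq_card0 => i; rewrite !inE fval0l ltxx andbF. Qed.

Lemma nneg0 A U : nneg 0 A U = 0%N.
Proof. by apply: eq_card0 => i; rewrite !inE fval0l ltxx andbF. Qed.

Lemma nnonpos0 A U : nnonpos 0 A U = #|A|.
Proof. by apply: eq_card => i; rewrite !inE fval0l lexx andbT. Qed.

Lemma codeg_star_le c A U : (codeg_star A U <= nnonpos c A U)%N.
Proof.
rewrite /codeg_star -minEnat -leEnat; have [->|c0] := eqVneq c 0.
  by rewrite nnonpos0; apply: bigmin_le_id.
have lt : (nnonpos c A U < #|A|.+1)%N by rewrite ltnS card_set_le.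
by apply: (bigmin_le_cond _ (j := Ordinal lt)); apply/asboolP; exists c.
Qed.

Lemma codeg_star_attained A U : (0 < n)%N ->
  exists2 c, c != 0 & nnonpos c A U = codeg_star A U.
Proof.
move=> n_gt0; pose one : 'cV[R]_n := const_mx 1.
have one_neq0 : one != 0.
  by apply/eqP => /matrixP/(_ (Ordinal n_gt0) 0)/eqP; rewrite !mxE oner_eq0.
have lt : (nnonpos one A U < #|A|.+1)%N by rewrite ltnS card_set_le.
pose P (k : 'I_#|A|.+1) := `[< exists c, c != 0 /\ nnonpos c A U = k >].
have P_one : P (Ordinal lt) by apply/asboolP; exists one.
rewrite /codeg_star -minEnat.
have [k /asboolP[c [c0 ck]] ->] := eq_bigmin _ P (fun k : 'I_#|A|.+1 => k : nat) P_one
  (fun k _ => ltn_ord k).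
by exists c.
Qed.

Lemma codeg_star_dim0 A U : n = 0%N -> codeg_star A U = #|A|.
Proof.
move=> n0; rewrite /codeg_star big_pred0 // => k.
by apply/asboolP => -[c [/eqP[]]]; apply: cV_dim0.
Qed.

(* [c + e h] for small [e > 0] keeps the sign of [c] off its hyperplane and takes
   the sign of [h] on it. *)
Lemma codeg_star_le_perturb c h A U :
    {in A, forall i, U i != 0 -> fval h (U i) != 0} ->
  (codeg_star A U <= nneg c A U + nzero A U
     + #|[set i in A | [&& U i != 0%R, fval c (U i) == 0%R & (fval h (U i) < 0)%R]]|)%N.
Proof.
move=> h_generic.
have [e e0 small] := small_perturbation [seq (fval c (U i), fval h (U i)) | i <- enum A].
apply: leq_trans (codeg_star_le (c + e *: h) A U) _.
rewrite /nnonpos /nneg /nzero !card_set_sum -!big_split /=; apply: leq_sum => i iA.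
rewrite fvalDl fvalZl; have [->|Ui0] /= := eqVneq (U i) 0.
  by case: (_ <= 0)%R; case: (_ < 0)%R.
case: ltrgtP => [c_lt0|c_gt0|c0] /=; first by case: (_ <= 0)%R.
  have iA' : i \in enum A by rewrite mem_enum.
  have /= := small _ (map_f (fun i => (fval c (U i), fval h (U i))) iA') (lt0r_neq0 c_gt0).
  by rewrite -{1}(gtr0_norm e0) -normrM => /le0_perturb->; rewrite lt_geF.
by rewrite c0 add0r pmulr_rle0 // le_eqVlt (negbTE (h_generic i iA Ui0)).
Qed.

(* Among the nonzero vectors on the hyperplane of [c], a generic functional or its
   opposite is negative on at most half. *)
Lemma two_codeg_star_le c A U :
  (2 * codeg_star A U <= 2 * nneg c A U + 2 * nzero A U + nnull c A U)%N.
Proof.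
have [g g_generic] := exists_generic_functional [seq U i | i <- enum A].
have gA : {in A, forall i, U i != 0 -> fval g (U i) != 0}.
  by move=> i iA; apply: g_generic; apply: map_f; rewrite mem_enum.
have ngA : {in A, forall i, U i != 0 -> fval (- g) (U i) != 0}.
  by move=> i iA /(gA i iA); rewrite fvalNl oppr_eq0.
pose neg_on_null h :=
  #|[set i in A | [&& U i != 0%R, fval c (U i) == 0%R & (fval h (U i) < 0)%R]]|.
have split_null : (neg_on_null g + neg_on_null (- g))%N = nnull c A U.
  rewrite /neg_on_null /nnull !card_set_sum -big_split; apply: eq_bigr => i iA /=.
  rewrite fvalNl oppr_lt0; have [Ui0|Ui0] //= := eqVneq (U i) 0.
  by have := gA i iA Ui0; case: (fval c (U i) == 0); case: ltrgtP.
have := codeg_star_le_perturb c g A U gA.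
have := codeg_star_le_perturb c (- g) A U ngA.
rewrite -/(neg_on_null g) -/(neg_on_null (- g)); lia.
Qed.

Lemma DD_codeg_star A U : (DD A U + 2 * codeg_star A U)%N = (#|A| + nzero A U)%N.
Proof.
have bound c : (npos c A U)%:Z - (nneg c A U)%:Z + 2 * (codeg_star A U)%:Z
    <= (#|A| + nzero A U)%:Z.
  have := two_codeg_star_le c A U; have := npos_nnonpos c A U.
  rewrite nnonpos_split; lia.
apply/eqP; rewrite eqn_leq; apply/andP; split.
  suff : (DD A U <= #|A| + nzero A U - 2 * codeg_star A U)%N.
    by have := bound 0; rewrite npos0 nneg0; lia.
  apply/bigmax_leqP => k /asboolP[c <-].
  by have := bound c; have := bound (- c); rewrite nposN nnegN; lia.
have [n0|n_gt0] := posnP n.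
  by rewrite codeg_star_dim0 // /nzero; have := card_set_le A (fun i => U i == 0); lia.
have [c _ c_min] := codeg_star_attained A U n_gt0.
have := npos_nnonpos c A U; rewrite c_min => pos_c.
have := nnonpos_split c A U; rewrite c_min => neg_c.
have lt : (`|(npos c A U)%:Z - (nneg c A U)%:Z|%N < #|A|.+1)%N by lia.
have : (`|(npos c A U)%:Z - (nneg c A U)%:Z|%N <= DD A U)%N.
  by apply: (leq_bigmax_cond (Ordinal lt)); apply/asboolP; exists c.
lia.
Qed.

Lemma deg_star_codeg_star A U :
  deg_star A U = #|A|%:Z - (codeg_star A U)%:Z - (crank A U)%:Z.
Proof.
rewrite /deg_star; have [n0|n_gt0] := posnP n.
  rewrite big_pred0 => [|k]; last first.
    by apply/asboolP => -[c [/eqP[]]]; apply: cV_dim0.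
  have : (crank A U <= n)%N by apply: rank_leq_col.
  by rewrite codeg_star_dim0 //; lia.
congr (_ - _); set m := \max_(_ < _ | _) _.
suff : m = (#|A| - codeg_star A U)%N by have := codeg_star_le 0 A U; rewrite nnonpos0; lia.
apply/eqP; rewrite eqn_leq; apply/andP; split.
  apply/bigmax_leqP => k /asboolP[c [c0 <-]].
  by have := npos_nnonpos c A U; have := codeg_star_le c A U; lia.
have [c c0 c_min] := codeg_star_attained A U n_gt0.
have lt : (npos c A U < #|A|.+1)%N by rewrite ltnS card_set_le.
have : (npos c A U <= m)%N.
  by apply: (leq_bigmax_cond (Ordinal lt)); apply/asboolP; exists c.
by have := npos_nnonpos c A U; lia.
Qed.

End Counting.

Lemma kermx_cokermx {F : fieldType} {m n : nat} (B : 'M[F]_(m, n)) :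
  (kermx (cokermx B) :=: B)%MS.
Proof. by apply/eqmxP/andP; rewrite sub_kermx mulmx_coker submxE mulmx_ker. Qed.

Section Quotient.
Context {R : realType} {n : nat} {I : finType}.
Variables (V : I -> 'rV[R]_n) (S : {set I}).
Hypothesis saturated : forall i, (V i <= clin S V)%MS -> i \in S.

Lemma crank_quot : crank [set: I] V = (crank S V + crank (~: S) (quot S V))%N.
Proof.
rewrite /crank /clin (big_setID S) /= setTI setTD.
set B := (\sum_(i in S) <<V i>>)%MS; set C := (\sum_(i in ~: S) <<V i>>)%MS.
rewrite -(mxrank_mul_ker (B + C)%MS (cokermx B)) addnC.
rewrite (cap_eqmx (eqmx_refl _) (kermx_cokermx B)) (capmx_idPr (addsmxSl B C)).
congr (_ + _)%N; apply/eqmx_rank/eqmxP.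
apply: eqmx_trans (addsmxMr _ _ _) _; rewrite mulmx_coker.
apply: eqmx_trans (adds0mx _ _) _; apply: eqmx_trans (sumsmxMr _ _ _) _.
apply: eqmx_sums => i _; rewrite /quot /qmap /clin -/B.
exact: eqmx_trans (eqmxMr _ (genmxE _)) (eqmx_sym (genmxE _)).
Qed.

Lemma nzero_setT : nzero [set: I] V = nzero S V.
Proof.
apply: eq_card => i; rewrite !inE /=; apply/idP/andP => [Vi0|[]//].
by split=> //; apply: saturated; rewrite (eqP Vi0) sub0mx.
Qed.

Lemma nzero_quot : nzero (~: S) (quot S V) = 0%N.
Proof.
apply: eq_card0 => i; rewrite !inE; apply/negbTE/andP => -[/negP iS quot0].
by apply/iS/saturated; rewrite submxE.
Qed.

End Quotient.

Theorem mainTheorem12 (R : realType) (n : nat) (I : finType)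
    (V : I -> 'rV[R]_n) (S : {set I})
    (hW : forall i : I, (V i <= clin S V)%MS -> i \in S) :
  let T := [set: I] in
  (DD T V = (DD S V + DD (~: S) (quot S V))%N <->
   deg_star T V = deg_star S V + deg_star (~: S) (quot S V)) /\
  (deg_star T V = deg_star S V + deg_star (~: S) (quot S V) <->
   codeg_star T V = (codeg_star S V + codeg_star (~: S) (quot S V))%N).
Proof.
move=> T; rewrite {}/T.
have card_T : #|[set: I]| = (#|S| + #|~: S|)%N by rewrite cardsC cardsT.
have rank_T := crank_quot V S.
have zero_T := nzero_setT V S hW; have zero_quot := nzero_quot V S hW.
have := DD_codeg_star [set: I] V; have := DD_codeg_star S V.
have := DD_codeg_star (~: S) (quot S V).
have := deg_star_codeg_star [set: I] V; have := deg_star_codeg_star S V.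
have := deg_star_codeg_star (~: S) (quot S V).
split; split; lia.
Qed.
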